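(* (i) For every $\epsilon\in\mathbb{C}$ and every $k\in\mathbb{N}_0$, $E_{2k+1}^{(2\epsilon)}(\epsilon)=0$. (ii) For every real number $r$, the Maclaurin expansion of $(\cos z)^r$ about $z=0$ is \[ (\cos z)^r=\sum_{k=0}^{\infty}(-1)^kE_{2k}^{(-r)}\biggl(-\frac{r}{2}\biggr)\frac{(2z)^{2k}}{(2k)!}. \]
   Context: For $\sigma\in\mathbb{C}$, the generalized Euler polynomials $E_k^{(\sigma)}(x)$ are defined by the generating function $\bigl(\frac{2}{e^z+1}\bigr)^\sigma e^{xz}=\sum_{k=0}^{\infty}E_k^{(\sigma)}(x)\frac{z^k}{k!}$ for $|z|<\pi$, where the power is the branch equal to $1$ at $z=0$. Likewise $(\cos z)^r$ denotes the branch that equals $1$ at $z=0$ (analytic near $0$). *)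

From Stdlib Require Import Reals Factorial.
From Coquelicot Require Import Coquelicot.
Open Scope C_scope.

Definition Cexp (z : C) : C :=
  (exp (fst z) * cos (snd z), exp (fst z) * sin (snd z))%R.

(* principal logarithm, valid (and used only) on the right half plane Re w > 0,
   where Log w = ln|w| + i Arg w with Arg w = atan (Im w / Re w). *)
Definition Clog_rhp (w : C) : C := (ln (Cmod w), atan (snd w / fst w))%R.

Definition Cpowc (w s : C) : C := Cexp (s * Clog_rhp w).

Definition Ccos (z : C) : C := (Cexp (Ci * z) + Cexp (- (Ci * z))) / 2.

Definition euler_gen (sigma x z : C) : C :=
  Cpowc (2 / (Cexp z + 1)) sigma * Cexp (x * z).

(* E is the family of generalized Euler polynomials E k sigma x = E_k^(sigma)(x):
   for every sigma, x the series sum_k E_k^(sigma)(x) z^k / k! converges to the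
   generating function for all z in some neighbourhood of 0 (this determines
   the coefficients uniquely). *)
Definition is_gen_Euler (E : nat -> C -> C -> C) : Prop :=
  forall sigma x : C, exists delta : R, (0 < delta)%R /\
    forall z : C, (Cmod z < delta)%R ->
      is_series (fun k => E k sigma x * z ^ k / RtoC (INR (Factorial.fact k)))
                (euler_gen sigma x z).

(* Since 2 / (e^w + 1) = e^(-w/2) / cosh (w/2), the generating function with
   sigma = 2 eps and x = eps collapses to cosh (w/2)^(-2 eps), an even function of w;
   hence its odd Taylor coefficients vanish, which is (i).  Putting w = 2 i z, so that
   cosh (w/2) = cos z, and eps = -r/2, the remaining even part of the series is (ii).
   The only care needed is with the branch: for |Im w| < pi/2 every argument involved
   stays in (-pi/2, pi/2), where the principal logarithm inverts the exponential. *)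

From Stdlib Require Import Reals Factorial Lra Lia.
From Coquelicot Require Import Coquelicot.
Open Scope C_scope.

Lemma Ceq (a b : C) : Re a = Re b -> Im a = Im b -> a = b.
Proof. destruct a, b; simpl; intros -> ->; reflexivity. Qed.

Lemma Cexp_add a b : Cexp (a + b) = Cexp a * Cexp b.
Proof.
  destruct a as [x y], b as [u v]. unfold Cexp, Cmult, Cplus; simpl.
  rewrite exp_plus, cos_plus, sin_plus. apply Ceq; simpl; ring.
Qed.

Lemma Cexp_neq0 a : Cexp a <> 0.
Proof.
  destruct a as [x y]; unfold Cexp; intro H; injection H as Hre Him.
  pose proof (exp_pos x). pose proof (sin2_cos2 y). unfold Rsqr in *.
  apply Rmult_integral in Hre as [Hre | Hre]; [lra |].
  apply Rmult_integral in Him as [Him | Him]; [lra |].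
  rewrite Hre, Him in *. lra.
Qed.

Lemma Cexp_sub a b : Cexp (a - b) = Cexp a / Cexp b.
Proof.
  replace (Cexp a) with (Cexp (a - b) * Cexp b) by (rewrite <- Cexp_add; f_equal; ring).
  field. apply Cexp_neq0.
Qed.

Lemma Cexp_Clog_rhp (u : C) : (0 < Re u)%R -> Cexp (Clog_rhp u) = u.
Proof.
  destruct u as [a b]; simpl; intro Ha.
  assert (Hmod : Cmod (a, b) = (a * sqrt (1 + (b / a)²))%R).
  { unfold Cmod; simpl.
    transitivity (sqrt (a² * (1 + (b / a)²))); [f_equal; unfold Rsqr; field; lra |].
    rewrite sqrt_mult_alt, sqrt_Rsqr by (try apply Rle_0_sqr; lra). reflexivity. }
  assert (Hs : (0 < sqrt (1 + (b / a)²))%R).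
  { apply sqrt_lt_R0. pose proof (Rle_0_sqr (b / a)). lra. }
  unfold Clog_rhp, Cexp; simpl.
  rewrite exp_ln by (rewrite Hmod; nra).
  rewrite cos_atan, sin_atan, Hmod. apply Ceq; simpl; field; lra.
Qed.

Lemma Clog_rhp_Cexp (v : C) : (Rabs (Im v) < PI / 2)%R -> Clog_rhp (Cexp v) = v.
Proof.
  destruct v as [x y]; simpl; intro Hy. apply Rabs_def2 in Hy.
  assert (Hcos : (0 < cos y)%R) by (apply cos_gt_0; lra).
  assert (Hmod : Cmod (Cexp (x, y)) = exp x).
  { unfold Cmod, Cexp; simpl.
    replace (exp x * cos y * (exp x * cos y * 1) + exp x * sin y * (exp x * sin y * 1))%R
      with (exp x * exp x * ((sin y)² + (cos y)²))%R by (unfold Rsqr; ring).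
    rewrite sin2_cos2, Rmult_1_r. apply sqrt_square. pose proof (exp_pos x). lra. }
  unfold Clog_rhp. rewrite Hmod, ln_exp. simpl.
  replace (exp x * sin y / (exp x * cos y))%R with (tan y).
  - rewrite atan_tan by lra. reflexivity.
  - unfold tan. field. pose proof (exp_pos x). lra.
Qed.

Definition Ccosh (w : C) : C := (Cexp w + Cexp (- w)) / 2.

Lemma Ccosh_opp (w : C) : Ccosh (- w) = Ccosh w.
Proof. unfold Ccosh. replace (- - w) with w by ring. rewrite Cplus_comm. reflexivity. Qed.

Lemma Ccosh_pair (x y : R) : Ccosh (x, y) = (cosh x * cos y, sinh x * sin y)%R.
Proof.
  unfold Ccosh, Cexp, cosh, sinh; simpl. rewrite cos_neg, sin_neg.
  apply Ceq; simpl; field.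
Qed.

Lemma Rabs_atan_le (s u : R) :
  (Rabs s <= Rabs (tan u))%R -> (Rabs u < PI / 2)%R -> (Rabs (atan s) <= Rabs u)%R.
Proof.
  intros Hs Hu.
  assert (atan_le : forall a b, (a <= b)%R -> (atan a <= atan b)%R).
  { intros a b [Hab | ->]; [left; apply atan_increasing |]; lra. }
  assert (Htan : tan (Rabs u) = Rabs (tan u)).
  { apply Rabs_def2 in Hu. destruct (Rle_or_lt 0 u) as [Hu0 | Hu0].
    - assert (0 <= tan u)%R.
      { destruct Hu0 as [Hu0 | <-]; [left; apply tan_gt_0 | rewrite tan_0]; lra. }
      rewrite !Rabs_pos_eq by lra. reflexivity.
    - assert (0 < tan (- u))%R by (apply tan_gt_0; lra).
      rewrite tan_neg in *. rewrite Rabs_left, Rabs_left by lra. rewrite tan_neg. reflexivity. }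
  pose proof (Rabs_pos u). apply Rabs_le_between in Hs. rewrite <- Htan in Hs.
  pose proof (atan_le _ _ (proj1 Hs)). pose proof (atan_le _ _ (proj2 Hs)).
  rewrite atan_opp, atan_tan in * by lra. apply Rabs_le. lra.
Qed.

Lemma Re_Ccosh_gt0 (v : C) : (Rabs (Im v) < PI / 2)%R -> (0 < Re (Ccosh v))%R.
Proof.
  destruct v as [x y]; intro Hy. rewrite Ccosh_pair; simpl in *.
  apply Rabs_def2 in Hy. apply Rmult_lt_0_compat.
  - unfold cosh. pose proof (exp_pos x). pose proof (exp_pos (- x)). lra.
  - apply cos_gt_0; lra.
Qed.

(* arg (cosh (x + i y)) = atan (tanh x * tan y), and |tanh x| <= 1. *)
Lemma Rabs_Im_Clog_rhp_Ccosh_le (v : C) :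
  (Rabs (Im v) < PI / 2)%R -> (Rabs (Im (Clog_rhp (Ccosh v))) <= Rabs (Im v))%R.
Proof.
  destruct v as [x y]; intro Hy. rewrite Ccosh_pair. unfold Clog_rhp; simpl in *.
  apply Rabs_atan_le; [| exact Hy].
  assert (Hcosy : (0 < cos y)%R) by (apply Rabs_def2 in Hy; apply cos_gt_0; lra).
  assert (Hcoshx : (0 < cosh x)%R).
  { unfold cosh. pose proof (exp_pos x). pose proof (exp_pos (- x)). lra. }
  assert (Htanh : (Rabs (sinh x / cosh x) <= 1)%R).
  { assert (Hsinh : (Rabs (sinh x) <= cosh x)%R).
    { unfold sinh, cosh. pose proof (exp_pos x). pose proof (exp_pos (- x)).
      apply Rabs_le. lra. }
    replace (sinh x) with (sinh x / cosh x * cosh x)%R in Hsinh by (field; lra).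
    rewrite Rabs_mult, (Rabs_pos_eq (cosh x)) in Hsinh by lra. nra. }
  replace (sinh x * sin y / (cosh x * cos y))%R with (sinh x / cosh x * tan y)%R
    by (unfold tan; field; lra).
  rewrite Rabs_mult. pose proof (Rabs_pos (tan y)). nra.
Qed.

Lemma two_div_Cexp_add1 (v : C) :
  Ccosh v <> 0 -> 2 / (Cexp (2 * v) + 1) = Cexp (- v) / Ccosh v.
Proof.
  intro Hcosh.
  assert (Hcosh_eq : Ccosh v = Cexp (- v) * (Cexp (2 * v) + 1) / 2).
  { unfold Ccosh. rewrite Cmult_plus_distr_l, <- Cexp_add.
    replace (- v + 2 * v) with v by ring. field. }
  assert (Hden : Cexp (2 * v) + 1 <> 0).
  { intro H0. apply Hcosh. rewrite Hcosh_eq, H0. field. }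
  rewrite Hcosh_eq. field. split; [exact Hden | apply Cexp_neq0].
Qed.

Lemma Clog_rhp_two_div_Cexp_add1 (v : C) : (Rabs (Im v) < PI / 4)%R ->
  Clog_rhp (2 / (Cexp (2 * v) + 1)) = - v - Clog_rhp (Ccosh v).
Proof.
  intro Hv.
  assert (Hv2 : (Rabs (Im v) < PI / 2)%R) by (pose proof PI_RGT_0; lra).
  pose proof (Re_Ccosh_gt0 _ Hv2) as Hre.
  pose proof (Rabs_Im_Clog_rhp_Ccosh_le _ Hv2) as HLle.
  set (L := Clog_rhp (Ccosh v)) in *.
  rewrite two_div_Cexp_add1.
  2: { intro H0. rewrite H0 in Hre. simpl in Hre. lra. }
  rewrite <- (Cexp_Clog_rhp _ Hre), <- Cexp_sub. fold L.
  apply Clog_rhp_Cexp.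
  change (Im (- v - L)) with (- Im v - Im L)%R.
  unfold Rminus. pose proof (Rabs_triang (- Im v) (- Im L)). rewrite !Rabs_Ropp in *. lra.
Qed.

Lemma euler_gen_diag (eps v : C) : (Rabs (Im v) < PI / 4)%R ->
  euler_gen (2 * eps) eps (2 * v) = Cpowc (Ccosh v) (- (2 * eps)).
Proof.
  intro Hv. unfold euler_gen, Cpowc.
  rewrite Clog_rhp_two_div_Cexp_add1, <- Cexp_add by exact Hv.
  f_equal. ring.
Qed.

Lemma sum_n_Re (a : nat -> C) n : Re (sum_n a n) = sum_n (fun k => Re (a k)) n.
Proof. induction n; [rewrite !sum_O | rewrite !sum_Sn, <- IHn]; reflexivity. Qed.

Lemma sum_n_Im (a : nat -> C) n : Im (sum_n a n) = sum_n (fun k => Im (a k)) n.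
Proof. induction n; [rewrite !sum_O | rewrite !sum_Sn, <- IHn]; reflexivity. Qed.

Lemma is_series_Re_Im (a : nat -> C) (l : C) : is_series a l ->
  is_series (fun n => Re (a n)) (Re l) /\ is_series (fun n => Im (a n)) (Im l).
Proof.
  intro H. split; apply filterlim_locally; intro eps;
    destruct (proj1 (filterlim_locally _ _) H eps) as [N HN]; exists N; intros n Hn;
    destruct (HN n Hn) as [Hre Him].
  - rewrite <- sum_n_Re. exact Hre.
  - rewrite <- sum_n_Im. exact Him.
Qed.

Lemma CV_radius_ge_of_ex_series (a : nat -> R) (x : R) :
  ex_series (fun n => a n * x ^ n)%R -> Rbar_le (Rabs x) (CV_radius a).
Proof.
  intro Hx. apply (proj1 (CV_radius_bounded a)).
  apply ex_series_lim_0 in Hx.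
  destruct (filterlim_bounded (fun n => a n * x ^ n)%R (ex_intro _ 0%R Hx)) as [M HM].
  exists M. intro n. rewrite RPow_abs, Rabs_mult, Rabs_Rabsolu, <- Rabs_mult. exact (HM n).
Qed.

Lemma pseries_null_coef_R (a : nat -> R) (d : R) : (0 < d)%R ->
  (forall t : R, (Rabs t < d)%R -> is_series (fun k => a k * t ^ k)%R 0%R) ->
  forall k, a k = 0%R.
Proof.
  intros Hd Ha k.
  assert (Hrad : Rbar_lt 0 (CV_radius a)).
  { apply Rbar_lt_le_trans with (Rabs (d / 2)).
    - simpl. apply Rabs_pos_lt. lra.
    - apply CV_radius_ge_of_ex_series. eexists. apply Ha.
      rewrite Rabs_pos_eq; lra. }
  change 0%R with ((fun _ : nat => 0%R) k).
  apply PSeries_ext_recip; [exact Hrad | rewrite CV_radius_const_0; exact I |].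
  exists (mkposreal d Hd). intros t Ht. rewrite PSeries_const_0.
  apply is_pseries_unique, is_pseries_R, Ha.
  change (Rabs (t - 0) < d)%R in Ht. rewrite Rminus_0_r in Ht. exact Ht.
Qed.

Lemma pseries_null_coef_C (a : nat -> C) (d : R) : (0 < d)%R ->
  (forall t : R, (Rabs t < d)%R -> is_series (fun k => a k * RtoC t ^ k) (RtoC 0)) ->
  forall k, a k = 0.
Proof.
  intros Hd Ha k.
  assert (Hparts : forall t : R, (Rabs t < d)%R ->
    is_series (fun k => Re (a k) * t ^ k)%R 0%R /\ is_series (fun k => Im (a k) * t ^ k)%R 0%R).
  { intros t Ht. destruct (is_series_Re_Im _ _ (Ha t Ht)) as [Hre Him].
    split; eapply is_series_ext; [| exact Hre | | exact Him]; intro n;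
      cbv beta; rewrite <- RtoC_pow; unfold Re, Im; simpl; ring. }
  apply Ceq.
  - apply (pseries_null_coef_R (fun k => Re (a k)) d Hd). intros t Ht. apply Hparts, Ht.
  - apply (pseries_null_coef_R (fun k => Im (a k)) d Hd). intros t Ht. apply Hparts, Ht.
Qed.

Lemma Cpow_even (c : C) (k : nat) : c ^ (2 * k) = (c * c) ^ k.
Proof. rewrite Cpow_mult_r. f_equal. simpl. ring. Qed.

Lemma odd_coef_eq0_of_even_sum (a : nat -> C) (f : R -> C) (d : R) : (0 < d)%R ->
  (forall t : R, (Rabs t < d)%R -> is_series (fun k => a k * RtoC t ^ k) (f t)) ->
  (forall t : R, (Rabs t < d)%R -> f (- t)%R = f t) ->
  forall k, a (2 * k + 1)%nat = 0.
Proof.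
  intros Hd Ha Hf k.
  assert (Hdiff : forall n, a n * (1 - (-1) ^ n) = 0).
  { apply (pseries_null_coef_C _ d Hd). intros t Ht.
    assert (Hneg : (Rabs (- t) < d)%R) by (rewrite Rabs_Ropp; exact Ht).
    assert (Hterm : forall n, a n * RtoC t ^ n - a n * RtoC (- t) ^ n
                              = a n * (1 - (-1) ^ n) * RtoC t ^ n).
    { intro n. replace (RtoC (- t)) with (-1 * RtoC t) by (apply Ceq; simpl; ring).
      rewrite Cpow_mult_l. ring. }
    replace (RtoC 0) with (f t - f (- t)%R) by (rewrite Hf by exact Ht; ring).
    eapply is_series_ext; [exact Hterm |].
    exact (is_series_minus _ _ _ _ (Ha t Ht) (Ha (- t)%R Hneg)). }
  specialize (Hdiff (2 * k + 1)%nat).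
  rewrite Cpow_add_r, Cpow_even in Hdiff.
  replace (-1 * -1) with (RtoC 1) in Hdiff by ring.
  rewrite Cpow_1_l, Cpow_1_r in Hdiff.
  replace (a (2 * k + 1)%nat) with (a (2 * k + 1)%nat * (1 - 1 * -1) / 2) by field.
  rewrite Hdiff. field.
Qed.

Lemma is_series_even_terms {K : AbsRing} {V : NormedModule K} (a : nat -> V) (l : V) :
  (forall k, a (2 * k + 1)%nat = zero) -> is_series a l ->
  is_series (fun k => a (2 * k)%nat) l.
Proof.
  intros Hodd Ha.
  assert (Hsum : forall n, sum_n (fun k => a (2 * k)%nat) n = sum_n a (2 * n + 1)).
  { induction n as [| n IH].
    - change (2 * 0 + 1)%nat with 1%nat. rewrite sum_O, sum_Sn, sum_O.
      change 1%nat with (2 * 0 + 1)%nat at 2. rewrite Hodd, plus_zero_r. reflexivity.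
    - rewrite sum_Sn, IH.
      replace (2 * S n + 1)%nat with (S (S (2 * n + 1))) by lia.
      rewrite !sum_Sn.
      replace (S (2 * n + 1)) with (2 * S n)%nat by lia.
      replace (S (2 * S n)) with (2 * S n + 1)%nat by lia.
      rewrite Hodd, plus_zero_r. reflexivity. }
  unfold is_series. apply filterlim_ext with (fun n => sum_n a (2 * n + 1)).
  { intro n. symmetry. apply Hsum. }
  apply filterlim_comp with (G := eventually); [| exact Ha].
  intros P [N HN]. exists N. intros n Hn. apply HN. lia.
Qed.

Lemma Cpow_Ci_even (k : nat) : Ci ^ (2 * k) = (-1) ^ k.
Proof. rewrite Cpow_even. f_equal. apply Ceq; simpl; ring. Qed.

Lemma RtoC_INR_fact_neq0 (k : nat) : RtoC (INR (fact k)) <> 0.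
Proof. intro H. injection H. apply INR_fact_neq_0. Qed.

Lemma gen_Euler_odd_diag (E : nat -> C -> C -> C) (hE : is_gen_Euler E) (eps : C) (k : nat) :
  E (2 * k + 1)%nat (2 * eps) eps = 0.
Proof.
  destruct (hE (2 * eps) eps) as (d & Hd & Hser).
  set (a := fun n => E n (2 * eps) eps / RtoC (INR (fact n))).
  set (f := fun t : R => euler_gen (2 * eps) eps (RtoC t)).
  assert (Hf : forall t : R, f t = Cpowc (Ccosh (RtoC (t / 2))) (- (2 * eps))).
  { intro t. rewrite <- euler_gen_diag by (simpl; rewrite Rabs_R0; pose proof PI_RGT_0; lra).
    unfold f. f_equal. apply Ceq; simpl; field. }
  assert (Ha : a (2 * k + 1)%nat = 0).
  { apply (odd_coef_eq0_of_even_sum a f d Hd).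
    - intros t Ht. eapply is_series_ext; [| apply Hser; rewrite Cmod_R; exact Ht].
      intro n. unfold a, Cdiv. simpl. ring.
    - intros t _. rewrite !Hf.
      replace (RtoC (- t / 2)) with (- RtoC (t / 2)) by (apply Ceq; simpl; field).
      rewrite Ccosh_opp. reflexivity. }
  unfold a in Ha. pose proof (RtoC_INR_fact_neq0 (2 * k + 1)) as Hfact.
  replace (E (2 * k + 1)%nat (2 * eps) eps)
    with (E (2 * k + 1)%nat (2 * eps) eps / RtoC (INR (fact (2 * k + 1))) * RtoC (INR (fact (2 * k + 1))))
    by (field; exact Hfact).
  rewrite Ha. ring.
Qed.

Lemma gen_Euler_diag_even_series (E : nat -> C -> C -> C) (hE : is_gen_Euler E) (eps : C) :
  exists delta : R, (0 < delta)%R /\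
    forall v : C, (Cmod v < delta)%R -> (Rabs (Im v) < PI / 4)%R ->
      is_series (fun k => E (2 * k)%nat (2 * eps) eps * (2 * v) ^ (2 * k) / RtoC (INR (fact (2 * k))))
                (Cpowc (Ccosh v) (- (2 * eps))).
Proof.
  destruct (hE (2 * eps) eps) as (d & Hd & Hser).
  exists (d / 2)%R. split; [lra |]. intros v Hv Him.
  rewrite <- euler_gen_diag by exact Him.
  apply (is_series_even_terms (fun k => E k (2 * eps) eps * (2 * v) ^ k / RtoC (INR (fact k)))).
  - intro k. rewrite gen_Euler_odd_diag by exact hE. unfold Cdiv. rewrite !Cmult_0_l. reflexivity.
  - apply Hser. rewrite Cmod_mult, Cmod_R, Rabs_pos_eq by lra. lra.
Qed.

Theorem mainTheorem3 (E : nat -> C -> C -> C) (hE : is_gen_Euler E) :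
  (forall (eps : C) (k : nat), E (2 * k + 1)%nat (2 * eps) eps = 0) /\
  (forall r : R, exists delta : R, (0 < delta)%R /\
     forall z : C, (Cmod z < delta)%R ->
       is_series
         (fun k => (-1) ^ k * E (2 * k)%nat (- RtoC r) (- RtoC r / 2)
                   * (2 * z) ^ (2 * k) / RtoC (INR (Factorial.fact (2 * k))))
         (Cpowc (Ccos z) (RtoC r))).
Proof.
  split; [exact (gen_Euler_odd_diag E hE) |].
  intro r.
  destruct (gen_Euler_diag_even_series E hE (- RtoC r / 2)) as (d & Hd & Hser).
  replace (2 * (- RtoC r / 2)) with (- RtoC r) in Hser by field.
  replace (- - RtoC r) with (RtoC r) in Hser by ring.
  exists (Rmin d (PI / 4)). split; [apply Rmin_glb_lt; [lra | pose proof PI_RGT_0; lra] |].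
  intros z Hz.
  assert (Hterm : forall k, E (2 * k)%nat (- RtoC r) (- RtoC r / 2) * (2 * (Ci * z)) ^ (2 * k)
                              / RtoC (INR (fact (2 * k)))
                          = (-1) ^ k * E (2 * k)%nat (- RtoC r) (- RtoC r / 2)
                              * (2 * z) ^ (2 * k) / RtoC (INR (fact (2 * k)))).
  { intro k. replace (2 * (Ci * z)) with (Ci * (2 * z)) by ring.
    rewrite Cpow_mult_l, Cpow_Ci_even. unfold Cdiv. ring. }
  eapply is_series_ext; [exact Hterm |]. apply Hser.
  - rewrite Cmod_mult, Cmod_Ci, Rmult_1_l. pose proof (Rmin_l d (PI / 4)). lra.
  - change (Im (Ci * z)) with (0 * Im z + 1 * Re z)%R. rewrite Rmult_0_l, Rmult_1_l, Rplus_0_l.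
    pose proof (re_le_Cmod z). pose proof (Rmin_r d (PI / 4)). lra.
Qed.
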